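(* Consider the planar system $$x_2'=\begin{cases}-y_2+x_2^2, & y_2<x_2^2,\\ 0, & y_2\ge x_2^2,\end{cases}\qquad y_2'=x_2,$$ and let $H(x_2,y_2)=\frac12 e^{-2y_2}\left(y_2-x_2^2+\frac12\right)$, $\mathcal{C}_{0,2}=\{y_2\ge x_2^2\}$. Then: (i) For initial conditions $x_2(0)=-c<0$, $y_2(0)>x_2(0)^2$, the solution reaches $(-c,c^2)$ after finite time, with $x_2'=0$, $y_2'=x_2=-c$ before that. From $(-c,c^2)$ it continues to the point $(c,c^2)$ along the level set $H(x_2,y_2)=\frac14e^{-2c^2}$. Afterwards $y_2\to\infty$ as $t_2\to\infty$ at speed $c$, while $x_2=c$ remains constant. (ii) For initial conditions $x_2(0)=c>0$, $y_2(0)>x_2(0)^2$, $y_2\to\infty$ as $t_2\to\infty$ at speed $c$, while $x_2=c$ remains constant. (iii) The set $\mathbb{R}^2\setminus\mathcal{C}_{0,2}=\{y_2<x_2^2\}$ is invariant for all solutions with $H(x_2(0),y_2(0))<0$. Each such solution stays on a level set of $H$ and satisfies $x_2\to\infty$ as $t_2\to\infty$. (iv) The set of equilibria is the half line $\{(0,y):y\ge0\}\subset\mathcal{C}_{0,2}$. (v) $\gamma_{c,2}(t_2)=\left(\frac12t_2,\frac14t_2^2-\frac12\right)$, $t_2\in\mathbb{R}$, is a solution lying in the level set $H=0$.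
   Context: This is the reduced system (at $r_2=0$, $\lambda_2=0$) of the rescaling chart of the blow-up of a canard point for the system with two-dimensional critical manifold $\{y\ge x^2\}$. ''Constant of motion of $H$'' means the solution stays in one level set of $H$. *)

From Stdlib Require Import Reals.
From Coquelicot Require Import Coquelicot.
Open Scope R_scope.

Definition F1 (x y : R) : R :=
  if Rlt_dec y (x ^ 2) then - y + x ^ 2 else 0.

Definition H (x y : R) : R :=
  / 2 * exp (- 2 * y) * (y - x ^ 2 + / 2).

Definition C02 (x y : R) : Prop := x ^ 2 <= y.

Definition is_sol (x y : R -> R) (T : Rbar) : Prop :=
  forall t, 0 <= t -> Rbar_lt (Finite t) T ->
    is_derive x t (F1 (x t) (y t)) /\ is_derive y t (x t).

Definition is_sol_R (x y : R -> R) : Prop :=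
  forall t, is_derive x t (F1 (x t) (y t)) /\ is_derive y t (x t).

Definition maximal_sol (x y : R -> R) (T : Rbar) : Prop :=
  is_sol x y T /\
  forall (T' : Rbar) (x' y' : R -> R),
    Rbar_lt T T' -> is_sol x' y' T' ->
    ~ (forall t, 0 <= t -> Rbar_lt (Finite t) T -> x' t = x t /\ y' t = y t).

Definition tends_to_pinfty_at (f : R -> R) (T : Rbar) : Prop :=
  forall M : R, exists t0 : R, 0 <= t0 /\ Rbar_lt (Finite t0) T /\
    forall t, t0 <= t -> Rbar_lt (Finite t) T -> M < f t.

From Stdlib Require Import Reals Lra ClassicalEpsilon Classical Ranalysis5.
From Coquelicot Require Import Coquelicot.
Open Scope R_scope.

(* Away from the parabola y = x^2 the system is either the smooth system
   x' = x^2 - y, y' = x, of which H is a first integral, or the motion x' = 0,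
   y' = x inside C_{0,2}.  Since x' >= 0, x is nondecreasing, and a Gronwall estimate
   keeps x frozen as long as the line y(s) + x(s) (t - s) stays in C_{0,2}.
   In (i) the solution falls to (-c, c^2) and leaves C_{0,2} there; below the
   parabola it follows H = e^{-2c^2}/4, on which y stays in [-1/2, c^2], so x must
   reach c, which happens only at (c, c^2), and from there x is frozen again.
   In (iii), on a level set H = h < 0 we have y = psi (x^2 - 1/2) with psi the inverse
   of w |-> w - 2h e^{2w}, so x solves the autonomous equation
   x' = x^2 - psi (x^2 - 1/2) > 1/2.  Solving it by separation of variables extends
   every solution along which x stays bounded; hence x -> +oo on maximal solutions. *)

(** * Calculus on the real line *)

Lemma is_derive_continuity_pt (f : R -> R) t l :
  is_derive f t l -> continuity_pt f t.
Proof.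
  intros Hd. apply continuity_pt_filterlim.
  apply (ex_derive_continuous (V := R_NormedModule)). now exists l.
Qed.

Lemma is_derive_eq (f : R -> R) (t l l' : R) : is_derive f t l -> l = l' -> is_derive f t l'.
Proof. now intros Hd <-. Qed.

Lemma Derive_eta (f : R -> R) t l : is_derive f t l -> Derive (fun s => f s) t = l.
Proof. apply is_derive_unique. Qed.

Lemma continuity_pt_ball (f : R -> R) t : continuity_pt f t ->
  forall e, 0 < e -> exists d, 0 < d /\
    forall s, Rabs (s - t) < d -> Rabs (f s - f t) < e.
Proof.
  intros Hc e He. destruct (Hc e He) as [d [Hd Hball]]. exists d; split; [lra|].
  intros s Hs. destruct (Req_dec s t) as [->|Hne].
  - unfold Rminus; rewrite Rplus_opp_r, Rabs_R0; lra.
  - now apply (Hball s).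
Qed.

Lemma continuity_pt_lt (f : R -> R) t v : continuity_pt f t -> f t < v ->
  exists d, 0 < d /\ forall s, Rabs (s - t) < d -> f s < v.
Proof.
  intros Hc Hlt. destruct (continuity_pt_ball f t Hc (v - f t)) as [d [Hd Hball]]; [lra|].
  exists d; split; [exact Hd|]. intros s Hs.
  specialize (Hball s Hs). apply Rabs_def2 in Hball. lra.
Qed.

Lemma continuity_pt_left_le (f : R -> R) a t v : continuity_pt f t -> a < t ->
  (forall s, a <= s < t -> f s <= v) -> f t <= v.
Proof.
  intros Hc Hat Hleft. apply Rnot_lt_le; intros Hlt.
  destruct (continuity_pt_lt (fun s => - f s) t (- v)) as [d [Hd Hnear]].
  { now apply continuity_pt_opp. }
  { lra. }
  set (s := Rmax a (t - d / 2)).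
  assert (a <= s) by apply Rmax_l. assert (t - d / 2 <= s) by apply Rmax_r.
  assert (s < t) by (apply Rmax_lub_lt; lra).
  specialize (Hnear s ltac:(apply Rabs_def1; lra)). specialize (Hleft s ltac:(lra)). lra.
Qed.

Lemma continuity_pt_left_eq (f : R -> R) a t v : continuity_pt f t -> a < t ->
  (forall s, a <= s < t -> f s = v) -> f t = v.
Proof.
  intros Hc Hat Hleft. apply Rle_antisym.
  - apply (continuity_pt_left_le f a); auto. intros s Hs. now rewrite Hleft.
  - enough (- f t <= - v) by lra.
    apply (continuity_pt_left_le (fun s => - f s) a); auto.
    + now apply continuity_pt_opp.
    + intros s Hs. rewrite Hleft; auto; lra.
Qed.

Lemma is_derive_neg_right (f : R -> R) s l : f s = 0 -> is_derive f s l -> l < 0 ->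
  exists d, 0 < d /\ forall u, s < u < s + d -> f u < 0.
Proof.
  intros Hfs Hd Hl. apply is_derive_Reals in Hd.
  destruct (Hd (- l) ltac:(lra)) as [d Hdelta].
  exists d; split; [apply cond_pos|]. intros u Hu.
  specialize (Hdelta (u - s) ltac:(lra) ltac:(apply Rabs_def1; lra)).
  replace (s + (u - s)) with u in Hdelta by ring. rewrite Hfs in Hdelta.
  apply Rabs_def2 in Hdelta.
  replace (f u) with ((f u - 0) / (u - s) * (u - s)) by (field; lra). nra.
Qed.

Lemma mvt_interval (f df : R -> R) a b : a <= b ->
  (forall t, a <= t <= b -> is_derive f t (df t)) ->
  exists c, a <= c <= b /\ f b - f a = df c * (b - a).
Proof.
  intros Hab Hd.
  destruct (MVT_gen f a b df) as [c [Hc Heq]];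
    rewrite ?Rmin_left, ?Rmax_right in * by lra.
  - intros t Ht. apply Hd; lra.
  - intros t Ht. apply (is_derive_continuity_pt f t (df t)), Hd; lra.
  - now exists c.
Qed.

Lemma increment_le (f df : R -> R) a b m : a <= b ->
  (forall t, a <= t <= b -> is_derive f t (df t)) ->
  (forall t, a <= t <= b -> df t <= m) ->
  f b - f a <= m * (b - a).
Proof.
  intros Hab Hd Hm. destruct (mvt_interval f df a b Hab Hd) as [c [Hc ->]].
  apply Rmult_le_compat_r; [lra | now apply Hm].
Qed.

Lemma increment_ge (f df : R -> R) a b m : a <= b ->
  (forall t, a <= t <= b -> is_derive f t (df t)) ->
  (forall t, a <= t <= b -> m <= df t) ->
  m * (b - a) <= f b - f a.
Proof.
  intros Hab Hd Hm. destruct (mvt_interval f df a b Hab Hd) as [c [Hc ->]].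
  apply Rmult_le_compat_r; [lra | now apply Hm].
Qed.

Lemma affine_of_derive_const (f df : R -> R) a b m : a <= b ->
  (forall t, a <= t <= b -> is_derive f t (df t)) ->
  (forall t, a <= t <= b -> df t = m) ->
  f b = f a + m * (b - a).
Proof.
  intros Hab Hd Hm.
  assert (Hle := increment_le f df a b m Hab Hd ltac:(intros t Ht; rewrite Hm; lra)).
  assert (Hge := increment_ge f df a b m Hab Hd ltac:(intros t Ht; rewrite Hm; lra)).
  lra.
Qed.

Lemma pos_derive_incr (f df : R -> R) :
  (forall w, is_derive f w (df w)) -> (forall w, 0 < df w) ->
  forall a b, a < b -> f a < f b.
Proof.
  intros Hd Hpos a b Hab.
  apply (incr_function f m_infty p_infty df); simpl; auto. intros w _ _. apply Hpos.
Qed.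

Lemma pos_derive_inj (f df : R -> R) :
  (forall w, is_derive f w (df w)) -> (forall w, 0 < df w) ->
  forall a b, f a = f b -> a = b.
Proof.
  intros Hd Hpos a b Heq.
  destruct (Rtotal_order a b) as [Hlt|[Heqab|Hgt]]; auto.
  - pose proof (pos_derive_incr f df Hd Hpos a b Hlt); lra.
  - pose proof (pos_derive_incr f df Hd Hpos b a Hgt); lra.
Qed.

Lemma gronwall_nonpos (g dg : R -> R) a b K : a <= b ->
  (forall u, a <= u <= b -> is_derive g u (dg u)) ->
  (forall u, a <= u <= b -> dg u <= K * g u) ->
  g a = 0 -> forall u, a <= u <= b -> g u <= 0.
Proof.
  intros Hab Hd HK Hga u Hu.
  set (G := fun s => g s * exp (- K * s)).
  assert (HG : G u - G a <= 0 * (u - a)).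
  { apply (increment_le G (fun s => (dg s - K * g s) * exp (- K * s))); [lra| |].
    - intros s Hs. unfold G. auto_derive.
      + now exists (dg s); apply Hd; lra.
      + rewrite (Derive_eta g s (dg s)) by (apply Hd; lra). ring.
    - intros w Hw. pose proof (exp_pos (- K * w)). pose proof (HK w ltac:(lra)). nra. }
  unfold G in HG. rewrite Hga in HG. pose proof (exp_pos (- K * u)). nra.
Qed.

Lemma Rbar_lt_of_le (u t : R) (T : Rbar) : u <= t -> Rbar_lt t T -> Rbar_lt u T.
Proof. intros Hut Ht. apply (Rbar_le_lt_trans _ t); [simpl; lra | exact Ht]. Qed.

Lemma Rbar_lt_window (t : R) (T : Rbar) : Rbar_lt t T ->
  exists d, 0 < d /\ forall s, s < t + d -> Rbar_lt s T.
Proof.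
  destruct T as [b| |]; simpl; intros Hlt; [| |contradiction].
  - exists (b - t); split; [lra|]. intros s Hs; lra.
  - exists 1; split; [lra|]. intros; exact I.
Qed.

Lemma real_induction (a : R) (b : Rbar) (Q : R -> Prop) :
  (forall t, a <= t -> Rbar_lt t b -> (forall s, a <= s < t -> Q s) -> Q t) ->
  (forall t, a <= t -> Rbar_lt t b -> (forall s, a <= s <= t -> Q s) ->
     exists d, 0 < d /\ forall s, t < s < t + d -> Q s) ->
  forall t, a <= t -> Rbar_lt t b -> Q t.
Proof.
  intros Hclosed Hopen t0 Ha Hb. apply NNPP; intros Hn.
  set (E := fun u => a <= u <= t0 /\ forall s, a <= s < u -> Q s).
  destruct (completeness E) as [sg [Hub Hlub]].
  - exists t0. intros u [Hu _]. lra.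
  - exists a. split; [lra|]. intros s Hs; lra.
  - assert (Hasg : a <= sg) by (apply Hub; split; [lra | intros s Hs; lra]).
    assert (Hsgt : sg <= t0) by (apply Hlub; intros u [Hu _]; lra).
    assert (Hbelow : forall s, a <= s < sg -> Q s).
    { intros s Hs. apply NNPP; intros HQ.
      enough (sg <= s) by lra. apply Hlub. intros u [Hu HQu].
      apply Rnot_lt_le; intros Hsu. apply HQ, HQu; lra. }
    assert (Hsgb : Rbar_lt sg b) by (apply (Rbar_lt_of_le sg t0); auto).
    assert (HQsg : Q sg) by now apply Hclosed.
    destruct (Hopen sg Hasg Hsgb) as [d [Hd Hright]].
    { intros s Hs. destruct (Req_dec s sg) as [->|]; auto. apply Hbelow; lra. }
    destruct (Req_dec sg t0) as [<-|Hne]; [contradiction|].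
    set (u := Rmin (sg + d / 2) t0).
    assert (Hu1 : u <= sg + d / 2) by apply Rmin_l.
    assert (Hu2 : u <= t0) by apply Rmin_r.
    assert (Hu3 : sg < u) by (apply Rmin_glb_lt; lra).
    enough (u <= sg) by lra. apply Hub. split; [lra|].
    intros s Hs. destruct (Rlt_le_dec s sg) as [Hlt|Hge].
    + apply Hbelow; lra.
    + destruct (Req_dec s sg) as [->|]; [exact HQsg | apply Hright; lra].
Qed.

Lemma first_crossing (f : R -> R) a b v : a <= b ->
  (forall t, a <= t <= b -> continuity_pt f t) -> f a < v -> v <= f b ->
  exists s, a < s <= b /\ f s = v /\ forall u, a <= u < s -> f u < v.
Proof.
  intros Hab Hc Hfa Hfb. apply NNPP; intros Hnone.
  enough (Hall : forall t, a <= t -> Rbar_lt t p_infty -> t <= b -> f t < v).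
  { specialize (Hall b Hab I (Rle_refl b)). lra. }
  apply (real_induction a p_infty (fun t => t <= b -> f t < v)).
  - intros t Ht _ Hleft Htb. destruct (Req_dec t a) as [->|Hne]; [exact Hfa|].
    assert (Hle : f t <= v).
    { apply (continuity_pt_left_le f a); [apply Hc; lra | lra |].
      intros s Hs. left. apply Hleft; lra. }
    destruct Hle as [Hlt|Heq]; [exact Hlt|].
    exfalso. apply Hnone. exists t. split; [lra|]. split; [exact Heq|].
    intros u Hu. apply Hleft; lra.
  - intros t Ht _ Hleft. destruct (Rlt_le_dec t b) as [Htb|Htb].
    + destruct (continuity_pt_lt f t v) as [d [Hd Hnear]].
      { apply Hc; lra. }
      { apply Hleft; lra. }
      exists d. split; [exact Hd|]. intros s Hs _. apply Hnear, Rabs_def1; lra.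
    + exists 1. split; [lra|]. intros s Hs Hsb. lra.
Qed.

(* x passes -e within time L, then e within time L', after which y gains more than
   hi - lo within time L. *)
Lemma antiderivative_unbounded (x y dx : R -> R) a e m lo hi : 0 < e -> 0 < m ->
  (forall t, a <= t -> is_derive x t (dx t)) ->
  (forall t, a <= t -> is_derive y t (x t)) ->
  (forall s t, a <= s <= t -> x s <= x t) ->
  (forall t, a <= t -> - e <= x t <= e -> m <= dx t) ->
  ~ (forall t, a <= t -> lo <= y t <= hi).
Proof.
  intros He Hm Hdx Hdy Hincr Hslow Hbounded.
  set (L := (hi - lo) / e + 1).
  assert (HL : hi - lo < e * L) by (unfold L; field_simplify; lra).
  assert (HL0 : 0 < L) by (pose proof (Hbounded a (Rle_refl a)); unfold L;
    assert (0 <= (hi - lo) / e) by (apply Rdiv_le_0_compat; lra); lra).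
  set (tA := a + L).
  assert (HA : - e <= x tA).
  { apply Rnot_lt_le; intros HA.
    assert (Hdrop := increment_le y x a tA (- e) ltac:(unfold tA; lra)
      ltac:(intros t Ht; apply Hdy; lra)
      ltac:(intros t Ht; pose proof (Hincr t tA ltac:(lra)); lra)).
    pose proof (Hbounded a (Rle_refl a)). pose proof (Hbounded tA ltac:(unfold tA; lra)).
    unfold tA in *. nra. }
  set (L' := 2 * e / m + 1).
  assert (HL' : 2 * e < m * L') by (unfold L'; field_simplify; lra).
  set (tB := tA + L').
  assert (HL'0 : 0 < L') by (unfold L'; assert (0 < 2 * e / m) by
    (apply Rdiv_lt_0_compat; lra); lra).
  assert (HB : e < x tB).
  { apply Rnot_le_lt; intros HB.
    assert (Hrise := increment_ge x dx tA tB m ltac:(unfold tB; lra)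
      ltac:(intros t Ht; apply Hdx; unfold tA in *; lra)
      ltac:(intros t Ht; apply Hslow; [unfold tA in *; lra|];
            pose proof (Hincr tA t ltac:(unfold tA in *; lra));
            pose proof (Hincr t tB ltac:(unfold tA in *; lra)); lra)).
    replace (tB - tA) with L' in Hrise by (unfold tB; ring). lra. }
  set (tC := tB + L).
  assert (Hrise := increment_ge y x tB tC e ltac:(unfold tC; lra)
    ltac:(intros t Ht; apply Hdy; unfold tB, tA in *; lra)
    ltac:(intros t Ht; pose proof (Hincr tB t ltac:(unfold tB, tA in *; lra)); lra)).
  pose proof (Hbounded tB ltac:(unfold tB, tA; lra)).
  pose proof (Hbounded tC ltac:(unfold tC, tB, tA; lra)).
  replace (tC - tB) with L in Hrise by (unfold tC; ring). lra.
Qed.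

Lemma is_lim_eventually_affine (y : R -> R) A c t0 : 0 < c ->
  (forall t, t0 <= t -> y t = A + c * (t - t0)) -> is_lim y p_infty p_infty.
Proof.
  intros Hc Hy P [M HM].
  set (t1 := Rmax t0 (t0 + (M + 1 - A) / c)).
  exists t1. intros t Ht. apply HM.
  pose proof (Rmax_l t0 (t0 + (M + 1 - A) / c)). pose proof (Rmax_r t0 (t0 + (M + 1 - A) / c)).
  rewrite Hy by (unfold t1 in Ht; lra).
  assert (Hm : c * ((M + 1 - A) / c) <= c * (t - t0))
    by (apply Rmult_le_compat_l; unfold t1 in Ht; lra).
  replace (c * ((M + 1 - A) / c)) with (M + 1 - A) in Hm by (field; lra). lra.
Qed.

(* An arbitrary value when [v] is not in the range of [f]. *)
Definition inv_fun (f : R -> R) (v : R) : R :=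
  epsilon (inhabits 0) (fun w => f w = v).

Lemma inv_fun_spec (f : R -> R) v : (exists w, f w = v) -> f (inv_fun f v) = v.
Proof. apply (epsilon_spec (inhabits 0) (fun w => f w = v)). Qed.

Lemma inv_fun_incr (f : R -> R) a b :
  (forall u w, u < w -> f u < f w) -> (forall u, a < u < b -> exists w, f w = u) ->
  forall u w, a < u < b -> a < w < b -> u < w -> inv_fun f u < inv_fun f w.
Proof.
  intros Hincr Hsurj u w Hu Hw Huw.
  pose proof (inv_fun_spec f u (Hsurj u Hu)). pose proof (inv_fun_spec f w (Hsurj w Hw)).
  apply Rnot_le_lt; intros [Hlt|Heq].
  - pose proof (Hincr _ _ Hlt). lra.
  - rewrite Heq in *. lra.
Qed.

Lemma is_derive_inv_fun (f df : R -> R) a b :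
  (forall w, is_derive f w (df w)) -> (forall w, 0 < df w) ->
  (forall u, a < u < b -> exists w, f w = u) ->
  forall v, a < v < b -> is_derive (inv_fun f) v (/ df (inv_fun f v)).
Proof.
  intros Hd Hpos Hsurj v Hv.
  set (g := inv_fun f).
  assert (Hincr := pos_derive_incr f df Hd Hpos).
  set (e := Rmin (v - a) (b - v) / 2).
  assert (He : 0 < e) by (unfold e; apply Rdiv_lt_0_compat; [apply Rmin_glb_lt|]; lra).
  pose proof (Rmin_l (v - a) (b - v)). pose proof (Rmin_r (v - a) (b - v)).
  set (lb := v - e). set (ub := v + e).
  assert (Hin : forall u, lb <= u <= ub -> a < u < b) by (intros u Hu; unfold lb, ub, e in *; lra).
  assert (Hfg : forall u, lb <= u <= ub -> f (g u) = u)
    by (intros u Hu; apply inv_fun_spec, Hsurj, Hin, Hu).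
  assert (Hg_lt : forall u w, lb <= u <= ub -> lb <= w <= ub -> u < w -> g u < g w)
    by (intros u w Hu Hw; apply (inv_fun_incr f a b Hincr Hsurj); apply Hin; auto).
  assert (Hg_le : forall u w, lb <= u <= ub -> lb <= w <= ub -> u <= w -> g u <= g w)
    by (intros u w Hu Hw [Hlt| ->]; [left; now apply Hg_lt | lra]).
  assert (Hlb : lb <= lb <= ub) by (unfold lb, ub; lra).
  assert (Hub : lb <= ub <= ub) by (unfold lb, ub; lra).
  assert (Hvin : lb <= v <= ub) by (unfold lb, ub; lra).
  assert (Hcont : continuity_pt g v).
  { apply (continuity_pt_recip_interv f g (g lb) (g ub)).
    - apply Hg_lt; auto. unfold lb, ub; lra.
    - intros; now apply Hincr.
    - rewrite !Hfg by auto. intros u Hu1 Hu2. now apply Hfg.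
    - rewrite !Hfg by auto. intros u Hu1 Hu2. split; apply Hg_le; auto; lra.
    - intros w _. now apply (is_derive_continuity_pt f w (df w)).
    - rewrite !Hfg by auto. unfold lb, ub; lra. }
  set (Prf := fun (w : R) (_ : g lb <= w <= g ub) =>
     exist (fun l => derivable_pt_lim f w l) (df w) (proj1 (is_derive_Reals f w (df w)) (Hd w))).
  assert (Hgv : g lb <= g v <= g ub) by (split; apply Hg_le; auto; lra).
  assert (Hlim := derivable_pt_lim_recip_interv f g lb ub v Prf Hcont
     ltac:(unfold lb, ub; lra) ltac:(unfold lb, ub; lra) Hgv Hfg
     ltac:(simpl; specialize (Hpos (g v)); lra)).
  simpl in Hlim. apply is_derive_Reals.
  replace (/ df (g v)) with (1 / df (g v)) by (field; specialize (Hpos (g v)); lra).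
  exact Hlim.
Qed.

Lemma is_derive_RInt_continuous (f : R -> R) a :
  (forall w, continuous f w) -> forall v, is_derive (fun v => RInt f a v) v (f v).
Proof.
  intros Hc v. apply (is_derive_RInt f (fun v => RInt f a v) a v); [|apply Hc].
  exists (mkposreal 1 Rlt_0_1). intros s _.
  apply (RInt_correct (V := R_CompleteNormedModule)).
  apply (ex_RInt_continuous (V := R_CompleteNormedModule)). intros z _. apply Hc.
Qed.

(** * Solutions of the system *)

Lemma F1_nonneg x y : 0 <= F1 x y.
Proof. unfold F1; destruct (Rlt_dec y (x ^ 2)); lra. Qed.

Lemma F1_lt x y : y < x ^ 2 -> F1 x y = x ^ 2 - y.
Proof. unfold F1; destruct (Rlt_dec y (x ^ 2)); lra. Qed.

Lemma F1_ge x y : x ^ 2 <= y -> F1 x y = 0.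
Proof. unfold F1; destruct (Rlt_dec y (x ^ 2)); lra. Qed.

Lemma H_eq_gap a b v : H a b = v -> b - a ^ 2 + / 2 = 2 * v * exp (2 * b).
Proof.
  unfold H. intros <-.
  replace (2 * (/ 2 * exp (-2 * b) * (b - a ^ 2 + / 2)) * exp (2 * b))
    with ((exp (-2 * b) * exp (2 * b)) * (b - a ^ 2 + / 2)) by field.
  rewrite <- exp_plus. replace (-2 * b + 2 * b) with 0 by ring. rewrite exp_0. ring.
Qed.

Lemma H_neg_gap a b : H a b < 0 -> b - a ^ 2 + / 2 < 0.
Proof.
  unfold H. intros Hneg. pose proof (exp_pos (-2 * b)).
  apply Rnot_le_lt; intros Hge.
  assert (0 <= / 2 * exp (-2 * b) * (b - a ^ 2 + / 2)) by (apply Rmult_le_pos; lra). lra.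
Qed.

Lemma is_derive_H_comp (x y : R -> R) t dx dy :
  is_derive x t dx -> is_derive y t dy ->
  is_derive (fun s => H (x s) (y s)) t
    (/ 2 * exp (-2 * y t) * (-2 * dy * (y t - x t ^ 2 + / 2) + dy - 2 * x t * dx)).
Proof.
  intros Hx Hy. unfold H. auto_derive.
  - repeat split; [now exists dy | now exists dy | now exists dx].
  - rewrite (Derive_eta x t dx Hx), (Derive_eta y t dy Hy). ring.
Qed.

Section Solution.

Variables (x y : R -> R) (T : Rbar).
Hypothesis sol : is_sol x y T.

Lemma sol_dx t : 0 <= t -> Rbar_lt t T -> is_derive x t (F1 (x t) (y t)).
Proof. intros; now apply sol. Qed.

Lemma sol_dy t : 0 <= t -> Rbar_lt t T -> is_derive y t (x t).
Proof. intros; now apply sol. Qed.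

Lemma sol_x_continuous t : 0 <= t -> Rbar_lt t T -> continuity_pt x t.
Proof. intros; eapply is_derive_continuity_pt, sol_dx; eauto. Qed.

Lemma sol_x_incr s t : 0 <= s <= t -> Rbar_lt t T -> x s <= x t.
Proof.
  intros Hst Ht.
  enough (0 * (t - s) <= x t - x s) by lra.
  apply (increment_ge x (fun u => F1 (x u) (y u))); [lra| |].
  - intros u Hu. apply sol_dx; [lra | apply (Rbar_lt_of_le u t); auto; lra].
  - intros u _. apply F1_nonneg.
Qed.

Lemma sol_gap_derive t : 0 <= t -> Rbar_lt t T ->
  is_derive (fun s => y s - x s ^ 2) t (x t - 2 * x t * F1 (x t) (y t)).
Proof.
  intros Ht HtT. auto_derive.
  - split; [now exists (x t); apply sol_dy | split; [|exact I]].
    now exists (F1 (x t) (y t)); apply sol_dx.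
  - rewrite (Derive_eta y t _ (sol_dy t Ht HtT)), (Derive_eta x t _ (sol_dx t Ht HtT)).
    ring.
Qed.

Lemma sol_gap_continuous t : 0 <= t -> Rbar_lt t T ->
  continuity_pt (fun s => y s - x s ^ 2) t.
Proof. intros; eapply is_derive_continuity_pt, sol_gap_derive; eauto. Qed.

Lemma sol_H_continuous t : 0 <= t -> Rbar_lt t T ->
  continuity_pt (fun s => H (x s) (y s)) t.
Proof.
  intros. eapply is_derive_continuity_pt, is_derive_H_comp; [apply sol_dx | apply sol_dy]; auto.
Qed.

(* Below the parabola H is a first integral of x' = x^2 - y, y' = x. *)
Lemma sol_H_stationary t : 0 <= t -> Rbar_lt t T -> y t <= x t ^ 2 ->
  is_derive (fun s => H (x s) (y s)) t 0.
Proof.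
  intros Ht HtT Hle.
  eapply is_derive_eq; [exact (is_derive_H_comp x y t _ _ (sol_dx t Ht HtT) (sol_dy t Ht HtT))|].
  destruct Hle as [Hlt|Heq].
  - rewrite F1_lt by exact Hlt. field.
  - rewrite F1_ge, Heq by lra. field.
Qed.

Lemma sol_H_const a b : 0 <= a <= b -> Rbar_lt b T ->
  (forall u, a <= u <= b -> y u <= x u ^ 2) -> H (x b) (y b) = H (x a) (y a).
Proof.
  intros Hab Hb Hbelow.
  rewrite (affine_of_derive_const (fun s => H (x s) (y s)) (fun _ => 0) a b 0); [ring|lra| |auto].
  intros u Hu. apply sol_H_stationary; [lra | apply (Rbar_lt_of_le u b); [lra|auto] | auto].
Qed.

Lemma sol_H_const_near t : 0 <= t -> Rbar_lt t T -> y t < x t ^ 2 ->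
  exists d, 0 < d /\ forall s, t <= s < t + d ->
    Rbar_lt s T /\ y s < x s ^ 2 /\ H (x s) (y s) = H (x t) (y t).
Proof.
  intros Ht HtT Hlt.
  destruct (continuity_pt_lt (fun s => y s - x s ^ 2) t 0) as [d1 [Hd1 Hbelow]];
    [now apply sol_gap_continuous | lra |].
  destruct (Rbar_lt_window t T HtT) as [d2 [Hd2 Hdom]].
  pose proof (Rmin_l d1 d2). pose proof (Rmin_r d1 d2).
  exists (Rmin d1 d2). split; [now apply Rmin_glb_lt|].
  assert (Hnear : forall s, t <= s < t + Rmin d1 d2 -> y s < x s ^ 2).
  { intros s Hs. specialize (Hbelow s ltac:(apply Rabs_def1; lra)). simpl in Hbelow; lra. }
  intros s Hs. split; [apply Hdom; lra|]. split; [now apply Hnear|].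
  apply sol_H_const; [lra | apply Hdom; lra |].
  intros u Hu. left. apply Hnear; lra.
Qed.

(* Gronwall for x - a: y >= a^2 gives F1 <= (x - a) (x + a) <= K (x - a). *)
Lemma sol_moves_vertically s t a : 0 <= s <= t -> Rbar_lt t T -> x s = a ->
  (forall u, s <= u <= t -> a ^ 2 <= y s + a * (u - s)) ->
  forall u, s <= u <= t -> x u = a /\ y u = y s + a * (u - s).
Proof.
  intros Hst HtT Hxs Hline.
  assert (Hdom : forall u, s <= u <= t -> 0 <= u /\ Rbar_lt u T)
    by (intros u Hu; split; [lra | apply (Rbar_lt_of_le u t); [lra|auto]]).
  assert (Hxa : forall u, s <= u <= t -> a <= x u)
    by (intros u Hu; rewrite <- Hxs; apply sol_x_incr; [lra | apply Hdom; lra]).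
  assert (Hxt : forall u, s <= u <= t -> x u <= x t)
    by (intros u Hu; apply sol_x_incr; [lra | exact HtT]).
  assert (Hy : forall u, s <= u <= t -> y s + a * (u - s) <= y u).
  { intros u Hu. enough (a * (u - s) <= y u - y s) by lra.
    apply (increment_ge y x); [lra| |].
    - intros w Hw. apply sol_dy; apply Hdom; lra.
    - intros w Hw. apply Hxa; lra. }
  set (K := Rabs (x t) + Rabs a).
  assert (HK : forall u, s <= u <= t -> F1 (x u) (y u) <= K * (x u - a)).
  { intros u Hu.
    pose proof (Hxa u Hu). pose proof (Hxt u Hu). pose proof (Hy u Hu). pose proof (Hline u Hu).
    pose proof (Rle_abs (x t)). pose proof (Rle_abs a). pose proof (Rabs_pos a).
    destruct (Rlt_le_dec (y u) (x u ^ 2)) as [Hlt|Hge].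
    - rewrite F1_lt by exact Hlt. unfold K. nra.
    - rewrite F1_ge by exact Hge. unfold K. pose proof (Rabs_pos (x t)). nra. }
  assert (Hx : forall u, s <= u <= t -> x u = a).
  { intros u Hu. apply Rle_antisym; [|now apply Hxa].
    enough (x u - a <= 0) by lra.
    apply (gronwall_nonpos (fun w => x w - a) (fun w => F1 (x w) (y w)) s t K);
      [lra | | exact HK | lra | exact Hu].
    intros w Hw. eapply is_derive_eq.
    - apply (is_derive_minus (V := R_NormedModule));
        [apply sol_dx; apply Hdom, Hw | apply is_derive_const].
    - unfold minus, plus, opp, zero; simpl. ring. }
  intros u Hu. split; [now apply Hx|].
  apply (affine_of_derive_const y x s u a); [lra | |].
  - intros w Hw. apply sol_dy; apply Hdom; lra.
  - intros w Hw. apply Hx; lra.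
Qed.

End Solution.

(** * The level arc through (-c, c^2) *)

Lemma H_level_exp a b k :
  H a b = / 4 * exp (-2 * k) -> b - a ^ 2 + / 2 = / 2 * exp (2 * (b - k)).
Proof.
  intros Hh. rewrite (H_eq_gap a b _ Hh).
  replace (2 * (b - k)) with (-2 * k + 2 * b) by ring. rewrite exp_plus. field.
Qed.

Lemma level_le_top a b k :
  H a b = / 4 * exp (-2 * k) -> b <= a ^ 2 -> b <= k.
Proof.
  intros Hh Hb. pose proof (H_level_exp a b k Hh) as Hl.
  apply Rnot_lt_le; intros Hlt.
  pose proof (exp_increasing 0 (2 * (b - k)) ltac:(lra)) as He. rewrite exp_0 in He. lra.
Qed.

Lemma level_gt_bottom a b k : H a b = / 4 * exp (-2 * k) -> - / 2 < b.
Proof.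
  intros Hh. pose proof (H_level_exp a b k Hh). pose proof (exp_pos (2 * (b - k))).
  pose proof (pow2_ge_0 a). lra.
Qed.

Lemma level_F1 a b k : H a b = / 4 * exp (-2 * k) -> b <= a ^ 2 ->
  F1 a b = / 2 - / 2 * exp (2 * (b - k)).
Proof.
  intros Hh Hb. pose proof (H_level_exp a b k Hh).
  destruct Hb as [Hlt|Heq]; [rewrite F1_lt | rewrite F1_ge]; lra.
Qed.

Lemma level_eq_top_of_sq a b k : H a b = / 4 * exp (-2 * k) -> a ^ 2 = k -> b = k.
Proof.
  intros Hh Hak. pose proof (H_level_exp a b k Hh) as Hl.
  destruct (Req_dec (b - k) 0) as [|Hne]; [lra|].
  pose proof (exp_ineq1 (2 * (b - k)) ltac:(lra)). lra.
Qed.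

Lemma level_eq_top_of_boundary a b k : H a b = / 4 * exp (-2 * k) -> b = a ^ 2 -> b = k.
Proof.
  intros Hh Hb. pose proof (H_level_exp a b k Hh) as Hl.
  assert (He : exp (2 * (b - k)) = exp 0) by (rewrite exp_0; lra).
  apply exp_inv in He. lra.
Qed.

Section Arc.

Variables (x y : R -> R) (c t1 : R).
Hypotheses (sol : is_sol x y p_infty) (c_pos : 0 < c) (t1_nonneg : 0 <= t1)
  (x_t1 : x t1 = - c) (y_t1 : y t1 = c ^ 2).

Let x_incr s t : t1 <= s <= t -> x s <= x t.
Proof. intros; apply (sol_x_incr x y p_infty sol); [lra | exact I]. Qed.

Lemma arc_boundary_only_at_start t : t1 <= t -> x t < c ->
  H (x t) (y t) = / 4 * exp (-2 * c ^ 2) -> y t = x t ^ 2 -> t = t1.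
Proof.
  intros Ht Hxt Hh Hb.
  pose proof (level_eq_top_of_boundary _ _ _ Hh Hb) as Hy.
  assert (Hx : x t = - c).
  { assert (Hp : (x t - c) * (x t + c) = 0) by nra.
    destruct (Rmult_integral _ _ Hp); lra. }
  assert (Hline := affine_of_derive_const y x t1 t (- c) Ht
    ltac:(intros u Hu; apply (sol_dy x y p_infty sol); [lra | exact I])
    ltac:(intros u Hu; pose proof (x_incr t1 u ltac:(lra));
          pose proof (x_incr u t ltac:(lra)); lra)).
  nra.
Qed.

Lemma arc_leaves_boundary : exists d, 0 < d /\ forall u, t1 < u < t1 + d -> y u < x u ^ 2.
Proof.
  destruct (is_derive_neg_right (fun s => y s - x s ^ 2) t1 (- c)) as [d [Hd Hbelow]].
  - rewrite x_t1, y_t1. ring.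
  - eapply is_derive_eq; [apply (sol_gap_derive x y p_infty sol); [lra | exact I]|].
    rewrite F1_ge, x_t1 by (rewrite x_t1, y_t1; nra). ring.
  - lra.
  - exists d. split; [exact Hd|]. intros u Hu. specialize (Hbelow u Hu). simpl in Hbelow. lra.
Qed.

Lemma arc_on_level t : t1 <= t -> x t < c ->
  H (x t) (y t) = / 4 * exp (-2 * c ^ 2) /\ y t <= x t ^ 2.
Proof.
  intros Ht.
  assert (Hstart : H (x t1) (y t1) = / 4 * exp (-2 * c ^ 2) /\ y t1 <= x t1 ^ 2).
  { rewrite x_t1, y_t1. split; [unfold H; field | nra]. }
  apply (real_induction t1 p_infty (fun t => x t < c ->
    H (x t) (y t) = / 4 * exp (-2 * c ^ 2) /\ y t <= x t ^ 2)); [| | exact Ht | exact I].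
  - intros s Hs _ Hleft Hxs. destruct (Req_dec s t1) as [->|Hne]; [exact Hstart|].
    assert (Hleft' : forall u, t1 <= u < s ->
      H (x u) (y u) = / 4 * exp (-2 * c ^ 2) /\ y u <= x u ^ 2).
    { intros u Hu. apply Hleft; [exact Hu|]. pose proof (x_incr u s ltac:(lra)). lra. }
    split.
    + apply (continuity_pt_left_eq (fun u => H (x u) (y u)) t1); [| lra | apply Hleft'].
      apply (sol_H_continuous x y p_infty sol); [lra | exact I].
    + enough (y s - x s ^ 2 <= 0) by lra.
      apply (continuity_pt_left_le (fun u => y u - x u ^ 2) t1); [| lra |].
      * apply (sol_gap_continuous x y p_infty sol); [lra | exact I].
      * intros u Hu. destruct (Hleft' u Hu). lra.
  - intros s Hs _ Hleft. destruct (Rlt_le_dec (x s) c) as [Hxs|Hxs].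
    2: { exists 1. split; [lra|]. intros u Hu Hxu. pose proof (x_incr s u ltac:(lra)). lra. }
    destruct (Hleft s ltac:(lra) Hxs) as [Hh [Hlt|Hb]].
    + destruct (sol_H_const_near x y p_infty sol s ltac:(lra) I Hlt) as [d [Hd Hnear]].
      exists d. split; [exact Hd|]. intros u Hu _.
      destruct (Hnear u ltac:(lra)) as [_ [Hu1 Hu2]]. split; [congruence | lra].
    + pose proof (arc_boundary_only_at_start s Hs Hxs Hh Hb); subst s.
      destruct arc_leaves_boundary as [d [Hd Hbelow]].
      exists d. split; [exact Hd|]. intros u Hu _. split; [|left; now apply Hbelow].
      rewrite <- Hh. apply (sol_H_const x y p_infty sol); [lra | exact I |].
      intros w Hw. destruct (Req_dec w t1) as [->|]; [lra|]. left; apply Hbelow; lra.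
Qed.

(* Otherwise y would stay in [-1/2, c^2] while the nondecreasing x crosses
   [-c/2, c/2], where its speed is bounded below. *)
Lemma arc_reaches_c : exists ts, t1 <= ts /\ c <= x ts.
Proof.
  apply NNPP; intros Hnever.
  assert (Hbelow : forall t, t1 <= t -> x t < c)
    by (intros t Ht; apply Rnot_le_lt; intros Hle; apply Hnever; now exists t).
  set (m := / 2 - / 2 * exp (- (3 * c ^ 2) / 2)).
  assert (Hm : 0 < m).
  { unfold m. pose proof (exp_increasing (- (3 * c ^ 2) / 2) 0 ltac:(nra)) as He.
    rewrite exp_0 in He. lra. }
  apply (antiderivative_unbounded x y (fun t => F1 (x t) (y t)) t1 (c / 2) m (- / 2) (c ^ 2));
    [lra | exact Hm | | | exact x_incr | |].
  - intros t Ht. apply (sol_dx x y p_infty sol); [lra | exact I].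
  - intros t Ht. apply (sol_dy x y p_infty sol); [lra | exact I].
  - intros t Ht Hx. destruct (arc_on_level t Ht (Hbelow t Ht)) as [Hh Hb].
    rewrite (level_F1 _ _ _ Hh Hb). unfold m.
    enough (exp (2 * (y t - c ^ 2)) <= exp (- (3 * c ^ 2) / 2)) by lra.
    destruct (Req_dec (2 * (y t - c ^ 2)) (- (3 * c ^ 2) / 2)) as [->|]; [lra|].
    left. apply exp_increasing. nra.
  - intros t Ht. destruct (arc_on_level t Ht (Hbelow t Ht)) as [Hh Hb].
    split; [left; exact (level_gt_bottom _ _ _ Hh) | exact (level_le_top _ _ _ Hh Hb)].
Qed.

Lemma arc_end : exists t2, t1 < t2 /\ x t2 = c /\ y t2 = c ^ 2 /\
  forall t, t1 <= t <= t2 -> H (x t) (y t) = / 4 * exp (-2 * c ^ 2).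
Proof.
  destruct arc_reaches_c as [ts [Hts Hxts]].
  destruct (first_crossing x t1 ts c Hts) as [t2 [Ht2 [Hx2 Hbefore]]]; [| lra | exact Hxts |].
  { intros t Ht. apply (sol_x_continuous x y p_infty sol); [lra | exact I]. }
  assert (Hlevel : forall t, t1 <= t <= t2 -> H (x t) (y t) = / 4 * exp (-2 * c ^ 2)).
  { intros t Ht. destruct (Req_dec t t2) as [->|Hne].
    - apply (continuity_pt_left_eq (fun u => H (x u) (y u)) t1); [| lra |].
      + apply (sol_H_continuous x y p_infty sol); [lra | exact I].
      + intros u Hu. apply arc_on_level; [lra | now apply Hbefore].
    - apply arc_on_level; [lra | apply Hbefore; lra]. }
  exists t2. split; [lra|]. split; [exact Hx2|]. split; [|exact Hlevel].
  apply (level_eq_top_of_sq (x t2)); [apply Hlevel; lra | rewrite Hx2; ring].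
Qed.

End Arc.

Lemma sol_from_neg_x (c : R) (x y : R -> R) : 0 < c ->
  is_sol x y p_infty -> x 0 = - c -> (x 0) ^ 2 < y 0 ->
  exists t1 t2 : R, 0 < t1 /\ t1 < t2 /\
    (forall t, 0 <= t <= t1 -> x t = - c /\ y t = y 0 - c * t) /\
    x t1 = - c /\ y t1 = c ^ 2 /\
    (forall t, t1 <= t <= t2 -> H (x t) (y t) = / 4 * exp (- 2 * c ^ 2)) /\
    x t2 = c /\ y t2 = c ^ 2 /\
    (forall t, t2 <= t -> x t = c /\ y t = c ^ 2 + c * (t - t2)) /\
    is_lim y p_infty p_infty.
Proof.
  intros Hc sol Hx0 Hy0. rewrite Hx0 in Hy0.
  set (t1 := (y 0 - c ^ 2) / c).
  assert (Ht1 : 0 < t1) by (unfold t1; apply Rdiv_lt_0_compat; nra).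
  assert (Hct1 : c * t1 = y 0 - c ^ 2) by (unfold t1; field; lra).
  assert (Hfall : forall t, 0 <= t <= t1 -> x t = - c /\ y t = y 0 - c * t).
  { intros t Ht.
    destruct (sol_moves_vertically x y p_infty sol 0 t1 (- c) ltac:(lra) I Hx0
      ltac:(intros u Hu; nra) t Ht) as [Hx Hy].
    split; [exact Hx | rewrite Hy; ring]. }
  destruct (Hfall t1 ltac:(lra)) as [Hx1 Hy1].
  assert (Hy1' : y t1 = c ^ 2) by lra.
  destruct (arc_end x y c t1 sol Hc ltac:(lra) Hx1 Hy1') as [t2 [Ht12 [Hx2 [Hy2 Hlevel]]]].
  assert (Hrise : forall t, t2 <= t -> x t = c /\ y t = c ^ 2 + c * (t - t2)).
  { intros t Ht. rewrite <- Hy2.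
    apply (sol_moves_vertically x y p_infty sol t2 t c ltac:(lra) I Hx2); [|lra].
    intros u Hu. nra. }
  exists t1, t2. repeat (split; [assumption|]).
  apply (is_lim_eventually_affine y (c ^ 2) c t2 Hc). intros t Ht. now apply Hrise.
Qed.

Lemma sol_from_pos_x (c : R) (x y : R -> R) : 0 < c ->
  is_sol x y p_infty -> x 0 = c -> (x 0) ^ 2 < y 0 ->
  (forall t, 0 <= t -> x t = c /\ y t = y 0 + c * t) /\
  is_lim y p_infty p_infty.
Proof.
  intros Hc sol Hx0 Hy0. rewrite Hx0 in Hy0.
  assert (Hrise : forall t, 0 <= t -> x t = c /\ y t = y 0 + c * (t - 0)).
  { intros t Ht.
    apply (sol_moves_vertically x y p_infty sol 0 t c ltac:(lra) I Hx0); [|lra].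
    intros u Hu. nra. }
  split.
  - intros t Ht. destruct (Hrise t Ht) as [Hx Hy]. split; [exact Hx | rewrite Hy; ring].
  - apply (is_lim_eventually_affine y (y 0) c 0 Hc). intros t Ht. now apply Hrise.
Qed.

(** * Level curves with H < 0 *)

Lemma sol_H_neg_level (T : Rbar) (x y : R -> R) :
  is_sol x y T -> H (x 0) (y 0) < 0 ->
  forall t, 0 <= t -> Rbar_lt t T -> H (x t) (y t) = H (x 0) (y 0).
Proof.
  intros sol Hneg.
  apply (real_induction 0 T (fun t => H (x t) (y t) = H (x 0) (y 0))).
  - intros t Ht HtT Hleft. destruct (Req_dec t 0) as [->|Hne]; [reflexivity|].
    apply (continuity_pt_left_eq (fun s => H (x s) (y s)) 0); [| lra | exact Hleft].
    now apply (sol_H_continuous x y T sol).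
  - intros t Ht HtT Hleft.
    assert (Hlt : y t < x t ^ 2).
    { pose proof (H_neg_gap (x t) (y t) ltac:(rewrite Hleft; lra)). lra. }
    destruct (sol_H_const_near x y T sol t Ht HtT Hlt) as [d [Hd Hnear]].
    exists d. split; [exact Hd|]. intros s Hs.
    destruct (Hnear s ltac:(lra)) as [_ [_ ->]]. apply Hleft; lra.
Qed.

Lemma sol_H_neg_below_parabola (T : Rbar) (x y : R -> R) :
  is_sol x y T -> H (x 0) (y 0) < 0 ->
  forall t, 0 <= t -> Rbar_lt t T -> / 2 < x t ^ 2 - y t /\ F1 (x t) (y t) = x t ^ 2 - y t.
Proof.
  intros sol Hneg t Ht HtT.
  pose proof (H_neg_gap (x t) (y t)
    ltac:(rewrite (sol_H_neg_level T x y sol Hneg t Ht HtT); exact Hneg)).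
  split; [lra | apply F1_lt; lra].
Qed.

(* On {H = h} with h < 0, y = level_psi (x^2 - 1/2) and x' = level_speed x;
   level_time v is the time this scalar equation needs to go from x0 to v. *)
Section LevelCurve.

Variable h : R.
Hypothesis h_neg : h < 0.

Definition level_phi (w : R) : R := w - 2 * h * exp (2 * w).

Definition level_dphi (w : R) : R := 1 - 4 * h * exp (2 * w).

Lemma level_phi_derive w : is_derive level_phi w (level_dphi w).
Proof. unfold level_phi, level_dphi. auto_derive; [exact I | ring]. Qed.

Lemma level_dphi_gt1 w : 1 < level_dphi w.
Proof. unfold level_dphi. pose proof (exp_pos (2 * w)). nra. Qed.

Lemma level_dphi_pos w : 0 < level_dphi w.
Proof. pose proof (level_dphi_gt1 w). lra. Qed.

Lemma level_phi_surj v : exists w, level_phi w = v.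
Proof.
  set (w1 := Rmin v 0 + 2 * h).
  assert (Hw1 : level_phi w1 <= v).
  { unfold level_phi. pose proof (Rmin_l v 0). pose proof (Rmin_r v 0).
    assert (exp (2 * w1) <= 1).
    { rewrite <- exp_0. destruct (Req_dec (2 * w1) 0) as [->|]; [lra|].
      left; apply exp_increasing; unfold w1; lra. }
    unfold w1 in *. nra. }
  assert (Hv : v <= level_phi v) by (unfold level_phi; pose proof (exp_pos (2 * v)); nra).
  destruct (IVT_gen level_phi w1 v v) as [w [_ Hw]]; [| |now exists w].
  - intros w. apply (is_derive_continuity_pt _ _ _ (level_phi_derive w)).
  - split; [apply (Rle_trans _ (level_phi w1)); [apply Rmin_l | exact Hw1] |
            apply (Rle_trans _ (level_phi v)); [exact Hv | apply Rmax_r]].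
Qed.

Lemma H_level_phi a b : H a b = h -> level_phi b = a ^ 2 - / 2.
Proof. intros Hh. pose proof (H_eq_gap a b h Hh). unfold level_phi. lra. Qed.

Definition level_psi : R -> R := inv_fun level_phi.

Lemma level_psi_spec v : level_phi (level_psi v) = v.
Proof. apply inv_fun_spec, level_phi_surj. Qed.

Lemma level_psi_derive v : is_derive level_psi v (/ level_dphi (level_psi v)).
Proof.
  apply (is_derive_inv_fun level_phi level_dphi (v - 1) (v + 1));
    [exact level_phi_derive | exact level_dphi_pos | | lra].
  intros u _. apply level_phi_surj.
Qed.

Lemma level_psi_of_H a b : H a b = h -> b = level_psi (a ^ 2 - / 2).
Proof.
  intros Hh.
  apply (pos_derive_inj level_phi level_dphi level_phi_derive level_dphi_pos
    b (level_psi (a ^ 2 - / 2))).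
  now rewrite level_psi_spec, (H_level_phi a b Hh).
Qed.

Definition level_speed (w : R) : R := w ^ 2 - level_psi (w ^ 2 - / 2).

Lemma level_speed_eq w : level_speed w = level_dphi (level_psi (w ^ 2 - / 2)) / 2.
Proof.
  pose proof (level_psi_spec (w ^ 2 - / 2)) as Hspec.
  unfold level_speed, level_dphi. unfold level_phi in Hspec. lra.
Qed.

Lemma level_speed_gt w : / 2 < level_speed w.
Proof. rewrite level_speed_eq. pose proof (level_dphi_gt1 (level_psi (w ^ 2 - / 2))). lra. Qed.

Lemma level_speed_inv_continuous w : continuous (fun w => / level_speed w) w.
Proof.
  apply (ex_derive_continuous (V := R_NormedModule)). unfold level_speed. auto_derive.
  split; [now eexists; apply level_psi_derive|]. split; [|exact I].
  intros Hz. pose proof (level_speed_gt w) as Hg. unfold level_speed, Rminus in Hg. simpl in Hg.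
  lra.
Qed.

Lemma level_speed_inv_pos v : 0 < / level_speed v.
Proof. apply Rinv_0_lt_compat. pose proof (level_speed_gt v). lra. Qed.

Variable x0 : R.

Definition level_time (v : R) : R := RInt (fun w => / level_speed w) x0 v.

Lemma level_time_derive v : is_derive level_time v (/ level_speed v).
Proof. exact (is_derive_RInt_continuous _ x0 level_speed_inv_continuous v). Qed.

Lemma level_time_range u w : u < w ->
  forall t, level_time u < t < level_time w -> exists v, level_time v = t.
Proof.
  intros Huw t Ht.
  pose proof (pos_derive_incr level_time _ level_time_derive level_speed_inv_pos u w Huw).
  destruct (IVT_gen level_time u w t) as [v [_ Hv]]; [| |now exists v].
  - intros v. exact (is_derive_continuity_pt _ _ _ (level_time_derive v)).
  - rewrite Rmin_left, Rmax_right by lra. lra.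
Qed.

Definition level_x : R -> R := inv_fun level_time.

Definition level_y (t : R) : R := level_psi (level_x t ^ 2 - / 2).

Lemma level_curve_solution lo hi : (forall t, lo < t < hi -> exists w, level_time w = t) ->
  forall t, lo < t < hi ->
    is_derive level_x t (F1 (level_x t) (level_y t)) /\ is_derive level_y t (level_x t).
Proof.
  intros Hrange t Ht.
  assert (Hx : is_derive level_x t (level_speed (level_x t))).
  { eapply is_derive_eq;
      [apply (is_derive_inv_fun level_time (fun v => / level_speed v) lo hi); auto|].
    - exact level_time_derive.
    - exact level_speed_inv_pos.
    - apply Rinv_inv. }
  pose proof (level_speed_gt (level_x t)) as Hspeed.
  split.
  - rewrite F1_lt; [exact Hx|]. unfold level_y. unfold level_speed in Hspeed. lra.
  - unfold level_y. eapply is_derive_eq.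
    + apply (is_derive_comp level_psi (fun s => level_x s ^ 2 - / 2)); [apply level_psi_derive|].
      auto_derive; [now exists (level_speed (level_x t)) | reflexivity].
    + rewrite (Derive_eta level_x t _ Hx), level_speed_eq.
      set (d := level_dphi (level_psi (level_x t ^ 2 - / 2))).
      assert (Hd : 0 < d) by apply level_dphi_pos.
      unfold scal; simpl; unfold mult; simpl. field. lra.
Qed.

End LevelCurve.

Lemma sol_H_neg_y_eq (T : Rbar) (x y : R -> R) :
  is_sol x y T -> H (x 0) (y 0) < 0 ->
  forall t, 0 <= t -> Rbar_lt t T -> y t = level_psi (H (x 0) (y 0)) (x t ^ 2 - / 2).
Proof.
  intros sol Hneg t Ht HtT. apply (level_psi_of_H _ Hneg).
  now apply (sol_H_neg_level T x y sol Hneg).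
Qed.

Lemma sol_H_neg_level_time (T : Rbar) (x y : R -> R) :
  is_sol x y T -> H (x 0) (y 0) < 0 ->
  forall t, 0 <= t -> Rbar_lt t T -> level_time (H (x 0) (y 0)) (x 0) (x t) = t.
Proof.
  intros sol Hneg t Ht HtT.
  set (h := H (x 0) (y 0)) in *.
  replace t with (level_time h (x 0) (x 0) + 1 * (t - 0)) at 2
    by (unfold level_time; rewrite RInt_point; unfold zero; simpl; ring).
  apply (affine_of_derive_const (fun s => level_time h (x 0) (x s)) (fun _ => 1)); [lra| |auto].
  intros u Hu.
  assert (HuT : Rbar_lt u T) by (apply (Rbar_lt_of_le u t); [lra | exact HtT]).
  destruct (sol_H_neg_below_parabola T x y sol Hneg u ltac:(lra) HuT) as [Hgap HF1].
  eapply is_derive_eq.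
  - apply (is_derive_comp (level_time h (x 0)) x);
      [apply level_time_derive, Hneg | apply (sol_dx x y T sol); [lra | exact HuT]].
  - rewrite HF1, (sol_H_neg_y_eq T x y sol Hneg u ltac:(lra) HuT).
    fold h. fold (level_speed h (x u)).
    unfold scal; simpl; unfold mult; simpl.
    pose proof (level_speed_gt h Hneg (x u)). field. lra.
Qed.

(* Since level_time (x t) = t, a bound x <= M forces b <= level_time M,
   so level_x runs on past b. *)
Lemma sol_H_neg_extends (b M : R) (x y : R -> R) : 0 < b ->
  is_sol x y (Finite b) -> H (x 0) (y 0) < 0 -> (forall t, 0 <= t < b -> x t <= M) ->
  exists (B : R) (x' y' : R -> R), b < B /\ is_sol x' y' (Finite B) /\
    forall t, 0 <= t < b -> x' t = x t /\ y' t = y t.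
Proof.
  intros Hb sol Hneg Hbound.
  pose proof (sol_H_neg_y_eq _ x y sol Hneg) as Hy.
  pose proof (sol_H_neg_level_time _ x y sol Hneg) as Htx.
  set (h := H (x 0) (y 0)) in *.
  set (tau := level_time h (x 0)) in *.
  assert (Hrate := level_time_derive h Hneg (x 0)).
  assert (Hrate_pos := level_speed_inv_pos h Hneg).
  assert (Htau_incr := pos_derive_incr tau _ Hrate Hrate_pos).
  assert (HtauM : b <= tau M).
  { apply Rnot_lt_le; intros Hlt.
    set (t := (Rmax 0 (tau M) + b) / 2).
    pose proof (Rmax_l 0 (tau M)). pose proof (Rmax_r 0 (tau M)).
    assert (Hmax : Rmax 0 (tau M) < b) by (apply Rmax_lub_lt; lra).
    assert (Ht : 0 <= t < b) by (unfold t; lra).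
    assert (Hxt : tau (x t) <= tau M).
    { destruct (Hbound t Ht) as [Hlt'|Heq]; [left; now apply Htau_incr | rewrite Heq; lra]. }
    rewrite Htx in Hxt by (simpl; lra). unfold t in Hxt. lra. }
  set (lo := tau (x 0 - 1)). set (B := tau (M + 1)).
  assert (Hlo : lo < 0) by (rewrite <- (Htx 0) by (simpl; lra); apply Htau_incr; lra).
  assert (HB : b < B) by (pose proof (Htau_incr M (M + 1) ltac:(lra)); unfold B; lra).
  assert (Hrange : forall t, lo < t < B -> exists w, tau w = t).
  { pose proof (Hbound 0 ltac:(lra)). apply level_time_range; [exact Hneg | lra]. }
  assert (Hagree : forall t, 0 <= t < b -> level_x h (x 0) t = x t).
  { intros t Ht. apply (pos_derive_inj tau _ Hrate Hrate_pos).
    rewrite Htx by (simpl; lra). apply inv_fun_spec, Hrange. lra. }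
  exists B, (level_x h (x 0)), (level_y h (x 0)). split; [exact HB|]. split.
  - intros t Ht HtB. apply (level_curve_solution h Hneg (x 0) lo B Hrange).
    simpl in HtB. lra.
  - intros t Ht. split; [now apply Hagree|].
    unfold level_y. rewrite Hagree by exact Ht. symmetry. apply Hy; simpl; lra.
Qed.

Lemma sol_H_neg_escapes (T : Rbar) (x y : R -> R) :
  Rbar_lt (Finite 0) T -> is_sol x y T -> H (x 0) (y 0) < 0 ->
  maximal_sol x y T -> tends_to_pinfty_at x T.
Proof.
  intros HT sol Hneg [_ Hmax].
  destruct T as [b| |]; simpl in HT; [| |contradiction].
  - apply NNPP; intros Hn. apply not_all_ex_not in Hn as [M HM].
    assert (Hbound : forall t, 0 <= t < b -> x t <= M).
    { intros t Ht. apply Rnot_lt_le; intros Hlt. apply HM.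
      exists t. split; [lra|]. split; [simpl; lra|]. intros s Hs Hsb.
      pose proof (sol_x_incr x y (Finite b) sol t s ltac:(lra) Hsb). lra. }
    destruct (sol_H_neg_extends b M x y HT sol Hneg Hbound) as [B [x' [y' [HB [sol' Hagree]]]]].
    apply (Hmax (Finite B) x' y'); [simpl; lra | exact sol' |].
    intros t Ht Htb. apply Hagree. simpl in Htb. lra.
  - intros M.
    pose proof (Rmax_l 0 (2 * (M - x 0) + 1)). pose proof (Rmax_r 0 (2 * (M - x 0) + 1)).
    set (t0 := Rmax 0 (2 * (M - x 0) + 1)) in *.
    exists t0. split; [lra|]. split; [exact I|]. intros t Ht _.
    enough (/ 2 * (t - 0) <= x t - x 0) by lra.
    apply (increment_ge x (fun u => F1 (x u) (y u))); [lra| |].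
    + intros u Hu. apply (sol_dx x y p_infty sol); [lra | exact I].
    + intros u Hu. destruct (sol_H_neg_below_parabola _ x y sol Hneg u ltac:(lra) I). lra.
Qed.

Theorem lemma4p6 :
  (* (i) *)
  (forall (c : R) (x y : R -> R), 0 < c ->
     is_sol x y p_infty -> x 0 = - c -> (x 0) ^ 2 < y 0 ->
     exists t1 t2 : R, 0 < t1 /\ t1 < t2 /\
       (forall t, 0 <= t <= t1 -> x t = - c /\ y t = y 0 - c * t) /\
       x t1 = - c /\ y t1 = c ^ 2 /\
       (forall t, t1 <= t <= t2 -> H (x t) (y t) = / 4 * exp (- 2 * c ^ 2)) /\
       x t2 = c /\ y t2 = c ^ 2 /\
       (forall t, t2 <= t -> x t = c /\ y t = c ^ 2 + c * (t - t2)) /\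
       is_lim y p_infty p_infty) /\
  (* (ii) *)
  (forall (c : R) (x y : R -> R), 0 < c ->
     is_sol x y p_infty -> x 0 = c -> (x 0) ^ 2 < y 0 ->
     (forall t, 0 <= t -> x t = c /\ y t = y 0 + c * t) /\
     is_lim y p_infty p_infty) /\
  (* (iii) *)
  (forall (T : Rbar) (x y : R -> R),
     Rbar_lt (Finite 0) T -> is_sol x y T -> H (x 0) (y 0) < 0 ->
     (forall t, 0 <= t -> Rbar_lt (Finite t) T ->
        ~ C02 (x t) (y t) /\ H (x t) (y t) = H (x 0) (y 0)) /\
     (maximal_sol x y T -> tends_to_pinfty_at x T)) /\
  (* (iv) *)
  (forall a b : R, (F1 a b = 0 /\ a = 0) <-> (a = 0 /\ 0 <= b)) /\
  (forall a b : R, a = 0 /\ 0 <= b -> C02 a b) /\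
  (* (v) *)
  (is_sol_R (fun t => / 2 * t) (fun t => / 4 * t ^ 2 - / 2) /\
   forall t : R, H (/ 2 * t) (/ 4 * t ^ 2 - / 2) = 0).
Proof.
  split; [exact sol_from_neg_x|].
  split; [exact sol_from_pos_x|].
  split.
  { intros T x y HT sol Hneg. split; [|now apply sol_H_neg_escapes].
    intros t Ht HtT. unfold C02.
    destruct (sol_H_neg_below_parabola T x y sol Hneg t Ht HtT).
    split; [lra | now apply (sol_H_neg_level T x y sol Hneg)]. }
  split.
  { intros a b. split.
    - intros [HF ->]. split; [reflexivity|]. apply Rnot_lt_le; intros Hb.
      rewrite F1_lt in HF by (simpl; lra). simpl in HF. lra.
    - intros [-> Hb]. split; [apply F1_ge; simpl; lra | reflexivity]. }
  split.
  { intros a b [-> Hb]. unfold C02. simpl. lra. }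
  split.
  { intros t. rewrite F1_lt by (simpl; nra). split; auto_derive; auto; field. }
  intros t. unfold H. field.
Qed.
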